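(* Let the (random) sets $S_{\rm tr},S_1,\dots,S_m$ be the output of the Randomized meta-Greedy algorithm (defined in the context), and suppose every $f_i$ is monotone and submodular. Let $b=\max\{\frac{1}{k-l},\frac1l\}$ and $c=3\sqrt{b\log(1/b)}$. Then $$\mathbb{E}\Bigl[\sum_{i=1}^m f_i(S_{\rm tr}\cup S_i)\Bigr]\;\ge\;\bigl(1-b-\exp(-1+c)\bigr)\,\mathrm{OPT}.$$
   Context: $V$ is a finite ground set with $|V|=n$; $k,l$ are integers with $1\le l<k\le n$. For $i=1,\dots,m$, $f_i:2^V\to\mathbb{R}_{\ge 0}$ is a set function; monotone means $A\subseteq B\Rightarrow f_i(A)\le f_i(B)$, submodular means $f_i(A)+f_i(B)\ge f_i(A\cup B)+f_i(A\cap B)$. Define $$\mathrm{OPT}=\max_{S_{\rm tr}\subseteq V,\,|S_{\rm tr}|\le l}\;\sum_{i=1}^m\;\max_{S_i\subseteq V,\,|S_i|\le k-l} f_i(S_{\rm tr}\cup S_i).$$ Randomized meta-Greedy: start with $S_{\rm tr}=S_1=\dots=S_m=\emptyset$. While $|S_{\rm tr}|<l$ and $|S_i|<k-l$ (all $S_i$ have equal size throughout): compute $e_i^*\in\arg\max_{e\in V}[f_i(S_{\rm tr}\cup S_i\cup\{e\})-f_i(S_{\rm tr}\cup S_i)]$ for each $i$ and $e_{\rm tr}^*\in\arg\max_{e\in V}\sum_{i=1}^m[f_i(S_{\rm tr}\cup S_i\cup\{e\})-f_i(S_{\rm tr}\cup S_i)]$; then, independently of the past, with probability $l/k$ set $S_{\rm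 tr}\leftarrow S_{\rm tr}\cup\{e^*_{\rm tr}\}$, and otherwise (probability $(k-l)/k$) set $S_i\leftarrow S_i\cup\{e_i^*\}$ for all $i=1,\dots,m$. After the loop, whichever of $S_{\rm tr}$ (size limit $l$) or the $S_i$'s (size limit $k-l$) has not reached its limit is filled up greedily with the same greedy rules until the limit is reached. Ties are broken arbitrarily; $\log$ is the natural logarithm. *)

From HB Require Import structures.
From mathcomp Require Import all_boot all_order all_algebra.
From mathcomp Require Import reals sequences exp.
Set Implicit Arguments. Unset Strict Implicit. Unset Printing Implicit Defensive.
Import Order.TTheory GRing.Theory Num.Theory.
Local Open Scope ring_scope.

Section MetaGreedy.
Variables (R : realType) (V : finType) (m k l : nat).
Variable f : 'I_m -> {set V} -> R.

Definition monotone_set (g : {set V} -> R) :=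
  forall A B : {set V}, A \subset B -> g A <= g B.
Definition submodular_set (g : {set V} -> R) :=
  forall A B : {set V}, g (A :|: B) + g (A :&: B) <= g A + g B.

Definition gain (g : {set V} -> R) (S : {set V}) (e : V) := g (S :|: [set e]) - g S.

Definition OPT : R :=
  \big[Num.max/0]_(Str : {set V} | (#|Str| <= l)%N)
    \sum_(i < m) \big[Num.max/0]_(Si : {set V} | (#|Si| <= k - l)%N) f i (Str :|: Si).

(* Tie-breaking rules: arbitrary (history-dependent) choices of maximizers.
   The history is the sequence of step types performed so far
   (true = element added to S_tr, false = elements added to all S_i). *)
Variable ctr : seq bool -> {set V} -> {ffun 'I_m -> {set V}} -> V.
Variable ci : seq bool -> 'I_m -> {set V} -> {set V} -> V.

Definition valid_tr_choice :=
  forall h Str (Ss : {ffun 'I_m -> {set V}}) (e : V),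
    \sum_(i < m) gain (f i) (Str :|: Ss i) e <=
    \sum_(i < m) gain (f i) (Str :|: Ss i) (ctr h Str Ss).
Definition valid_i_choice :=
  forall h (i : 'I_m) Str Si (e : V),
    gain (f i) (Str :|: Si) e <= gain (f i) (Str :|: Si) (ci h i Str Si).

Definition state := ({set V} * {ffun 'I_m -> {set V}} * seq bool)%type.

Definition step_tr (st : state) : state :=
  let: (Str, Ss, h) := st in (Str :|: [set ctr h Str Ss], Ss, rcons h true).
Definition step_i (st : state) : state :=
  let: (Str, Ss, h) := st in
  (Str, [ffun i => Ss i :|: [set ci h i Str (Ss i)]], rcons h false).

Definition ntr (st : state) := count id st.2.
Definition ni (st : state) := count negb st.2.

(* main randomized loop, driven by coin flips (true = prob l/k: add to S_tr) *)
Fixpoint loop (coins : seq bool) (st : state) : state :=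
  match coins with
  | [::] => st
  | c :: cs =>
      if (ntr st < l)%N && (ni st < k - l)%N
      then loop cs (if c then step_tr st else step_i st)
      else st
  end.

Definition fill (st : state) : state :=
  iter (k - l - ni st) step_i (iter (l - ntr st) step_tr st).

Definition init_state : state := (set0, [ffun => set0], [::]).

(* k coins suffice: the loop performs at most k - 1 iterations *)
Definition final_state (w : {ffun 'I_k -> bool}) : state :=
  fill (loop [seq w j | j <- enum 'I_k] init_state).

Definition value (st : state) : R :=
  let: (Str, Ss, _) := st in \sum_(i < m) f i (Str :|: Ss i).

Definition coin_prob (w : {ffun 'I_k -> bool}) : R :=
  let p := l%:R / k%:R in \prod_(j < k) (if w j then p else 1 - p).

Definition expected_value : R :=
  \sum_(w : {ffun 'I_k -> bool}) coin_prob w * value (final_state w).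

End MetaGreedy.

Definition bconst (R : realType) (k l : nat) : R :=
  Num.max ((k - l)%:R^-1) (l%:R^-1).
Definition cconst (R : realType) (k l : nat) : R :=
  3 * Num.sqrt (bconst R k l * ln ((bconst R k l)^-1)).

(* Write p = l/k and gap = OPT - value.  By monotonicity and submodularity,
   every state satisfies OPT <= value + l * G_tr + (k - l) * G_i, where G_tr
   and G_i are the objective increases of the shared-set greedy step and of
   the individual greedy steps (OPT_greedy_bound).  Since a coin performs the
   first step with probability p = l/k and the second one otherwise, one coin
   multiplies the expected gap by 1 - 1/k (step_gap_contraction).  Over the k
   coins, the loop thus ends with expected gap at most (1 - 1/k)^k OPT
   <= e^{-1} OPT, plus OPT/k per coin wasted after the loop has stopped
   (gap_after_loop).  The drift Z = (1 - p) #tr - p #i of the coin counts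
   satisfies that Z^2 - p(1 - p) #steps is a martingale, while at the end one
   side is full and then p(1 - p) W^2 <= k b Z^2 for the number W of wasted
   coins; hence E[W^2] <= b k^2 and E[W] <= k sqrt b.  This gives the bound
   (1 - e^{-1} - sqrt b) OPT (greedy_expectation_bound), and an elementary
   estimate (constant_comparison) turns it into the stated constant. *)

From HB Require Import structures.
From mathcomp Require Import all_boot all_order all_algebra.
From mathcomp Require Import reals sequences exp.
From mathcomp Require Import ring lra zify.
Import Order.TTheory GRing.Theory Num.Theory.
Local Open Scope ring_scope.

Set Implicit Arguments. Unset Strict Implicit. Unset Printing Implicit Defensive.

(* Expectation over [n] independent coins showing [true] with probability [p],
   defined by conditioning on the first coin. *)
Section CoinExpectation.
Variables (R : realType) (p : R).

Fixpoint coinE (n : nat) (G : seq bool -> R) : R :=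
  match n with
  | 0 => G [::]
  | n'.+1 => p * coinE n' (fun s => G (true :: s))
             + (1 - p) * coinE n' (fun s => G (false :: s))
  end.

Lemma coinE_ext n G H : (forall s, G s = H s) -> coinE n G = coinE n H.
Proof.
elim: n G H => [|n IH] G H GH /=; first exact: GH.
by congr (_ * _ + _ * _); apply: IH => s; apply: GH.
Qed.

Lemma coinES n G : coinE n.+1 G =
  p * coinE n (fun s => G (true :: s)) + (1 - p) * coinE n (fun s => G (false :: s)).
Proof. by []. Qed.

Lemma coinED n G H : coinE n (fun s => G s + H s) = coinE n G + coinE n H.
Proof.
elim: n G H => [|n IH] G H //=.
rewrite (IH (fun s => G (true :: s))) (IH (fun s => G (false :: s))); ring.
Qed.

Lemma coinEZ n a G : coinE n (fun s => a * G s) = a * coinE n G.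
Proof.
elim: n G => [|n IH] G //=.
rewrite (IH (fun s => G (true :: s))) (IH (fun s => G (false :: s))); ring.
Qed.

Lemma coinE_cst n a : coinE n (fun _ => a) = a.
Proof. by elim: n => [|n IH] //=; rewrite IH; ring. Qed.

Lemma coinEB n G H : coinE n (fun s => G s - H s) = coinE n G - coinE n H.
Proof.
rewrite (@coinE_ext n _ (fun s => G s + (-1) * H s)) => [|s]; last by ring.
by rewrite coinED coinEZ; ring.
Qed.

Lemma coinE_size n a : coinE n (fun s => (size s)%:R + a) = n%:R + a.
Proof.
elim: n a => [|n IH] a /=; first by rewrite add0r.
rewrite (@coinE_ext n _ (fun s => (size s)%:R + (a + 1))) => [|s]; last first.
  by rewrite -addn1 natrD; ring.
by rewrite IH -addn1 natrD; ring.
Qed.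

Hypotheses (p_ge0 : 0 <= p) (p_le1 : p <= 1).

Lemma coinE_le n G H :
  (forall s, size s = n -> G s <= H s) -> coinE n G <= coinE n H.
Proof.
elim: n G H => [|n IH] G H GH /=; first exact: GH.
have q_ge0 : 0 <= 1 - p by rewrite subr_ge0.
by apply: lerD; apply: ler_wpM2l => //; apply: IH => s sz; apply: GH; rewrite /= sz.
Qed.

Lemma coinE_le_of_sq n X t :
  0 < t -> coinE n (fun s => X s ^+ 2) <= t ^+ 2 -> coinE n X <= t.
Proof.
move=> t_gt0 EX2.
have : coinE n (fun s => (2 * t) * X s) <= coinE n (fun s => X s ^+ 2 + t ^+ 2).
  by apply: coinE_le => s _; have := sqr_ge0 (X s - t); nra.
rewrite coinEZ coinED coinE_cst; nra.
Qed.

End CoinExpectation.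

Definition ffun_cons (T : finType) n (b : T) (g : {ffun 'I_n -> T}) :
    {ffun 'I_n.+1 -> T} :=
  [ffun j => if unlift ord0 j is Some j' then g j' else b].

Lemma ffun_cons0 (T : finType) n b (g : {ffun 'I_n -> T}) : ffun_cons b g ord0 = b.
Proof. by rewrite ffunE unlift_none. Qed.

Lemma ffun_cons_lift (T : finType) n b (g : {ffun 'I_n -> T}) j :
  ffun_cons b g (lift ord0 j) = g j.
Proof. by rewrite ffunE liftK. Qed.

Lemma sum_ffunS (T : finType) (M : nmodType) n (F : {ffun 'I_n.+1 -> T} -> M) :
  \sum_(w : {ffun 'I_n.+1 -> T}) F w =
  \sum_(b : T) \sum_(g : {ffun 'I_n -> T}) F (ffun_cons b g).
Proof.
pose split_ffun (w : {ffun 'I_n.+1 -> T}) := (w ord0, [ffun j => w (lift ord0 j)]).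
have consK : cancel (fun x => ffun_cons x.1 x.2) split_ffun.
  by move=> [b g]; rewrite /split_ffun ffun_cons0; congr pair;
    apply/ffunP => j; rewrite ffunE ffun_cons_lift.
have splitK : cancel split_ffun (fun x => ffun_cons x.1 x.2).
  move=> w; apply/ffunP => j; rewrite /split_ffun ffunE.
  by case: unliftP => [j' ->|->] //=; rewrite ffunE.
rewrite (reindex (fun x => ffun_cons x.1 x.2)) /=; last first.
  by exists split_ffun => x _; [exact: consK | exact: splitK].
by rewrite pair_bigA.
Qed.

Lemma coin_sum (R : realType) (p : R) n (G : seq bool -> R) :
  \sum_(w : {ffun 'I_n -> bool})
     (\prod_(j < n) (if w j then p else 1 - p)) * G [seq w j | j <- enum 'I_n]
  = coinE p n G.
Proof.
elim: n G => [|n IH] G /=.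
  rewrite (big_pred1 [ffun j => false]); last first.
    by move=> w /=; symmetry; apply/eqP/ffunP => -[].
  by rewrite big_ord0 mul1r enum_ord0.
rewrite sum_ffunS big_bool /= -(IH (fun s => G (true :: s)))
  -(IH (fun s => G (false :: s))) !mulr_sumr.
congr (_ + _); apply: eq_bigr => g _;
  rewrite big_ord_recl enum_ordSl /= ffun_cons0 -map_comp mulrA;
  under eq_bigr do rewrite ffun_cons_lift;
  by congr (_ * G (_ :: _)); apply: eq_map => j /=; rewrite ffun_cons_lift.
Qed.

Section Submodular.
Variables (R : realType) (V : finType) (g : {set V} -> R).
Hypotheses (g_mono : monotone_set g) (g_sub : submodular_set g).

Lemma gain_ge0 S e : 0 <= gain g S e.
Proof. by rewrite /gain subr_ge0; apply: g_mono; apply: subsetUl. Qed.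

Lemma union_seq_le A s : g (A :|: [set:: s]) <= g A + \sum_(e <- s) gain g A e.
Proof.
elim: s => [|e s IH]; first by rewrite set_nil setU0 big_nil addr0.
rewrite set_cons big_cons.
have union_eq : (A :|: [set:: s]) :|: (A :|: [set e]) = A :|: (e |: [set:: s]).
  by apply/setP => x; rewrite !inE; case: (x \in A); case: (x == e); case: (x \in s).
have := g_sub (A :|: [set:: s]) (A :|: [set e]); rewrite union_eq.
have : g A <= g ((A :|: [set:: s]) :&: (A :|: [set e])).
  by apply: g_mono; rewrite subsetI !subsetUl.
rewrite /gain; lra.
Qed.

End Submodular.

Section GreedyBound.
Variables (R : realType) (V : finType) (m k l : nat) (f : 'I_m -> {set V} -> R).
Variable ctr : seq bool -> {set V} -> {ffun 'I_m -> {set V}} -> V.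
Variable ci : seq bool -> 'I_m -> {set V} -> {set V} -> V.
Hypotheses (f_ge0 : forall i A, 0 <= f i A) (f_mono : forall i, monotone_set (f i))
  (f_sub : forall i, submodular_set (f i)).
Hypotheses (ctr_greedy : valid_tr_choice f ctr) (ci_greedy : valid_i_choice f ci).

Definition tr_gain Str (Ss : {ffun 'I_m -> {set V}}) h : R :=
  \sum_(i < m) gain (f i) (Str :|: Ss i) (ctr h Str Ss).
Definition ind_gain Str (Ss : {ffun 'I_m -> {set V}}) h : R :=
  \sum_(i < m) gain (f i) (Str :|: Ss i) (ci h i Str (Ss i)).

Lemma tr_gain_ge0 Str Ss h : 0 <= tr_gain Str Ss h.
Proof. by apply: sumr_ge0 => i _; exact: gain_ge0. Qed.

Lemma ind_gain_ge0 Str Ss h : 0 <= ind_gain Str Ss h.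
Proof. by apply: sumr_ge0 => i _; exact: gain_ge0. Qed.

Lemma value_step_tr Str Ss h :
  value f (step_tr ctr (Str, Ss, h)) = value f (Str, Ss, h) + tr_gain Str Ss h.
Proof.
rewrite /= /tr_gain /gain sumrB addrC subrK; apply: eq_bigr => i _.
by rewrite setUAC.
Qed.

Lemma value_step_i Str Ss h :
  value f (step_i ci (Str, Ss, h)) = value f (Str, Ss, h) + ind_gain Str Ss h.
Proof.
rewrite /= /ind_gain /gain sumrB addrC subrK; apply: eq_bigr => i _.
by rewrite ffunE setUA.
Qed.

Lemma value_ge0 st : 0 <= value f st.
Proof. by case: st => [[Str Ss] h]; apply: sumr_ge0 => i _; exact: f_ge0. Qed.

Lemma OPT_ge0 : 0 <= OPT k l f.
Proof. exact: bigmax_ge_id. Qed.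

Lemma completion_bound i O Str (Ss : {ffun 'I_m -> {set V}}) h :
  \big[Num.max/0]_(Si : {set V} | (#|Si| <= k - l)%N) f i (O :|: Si) <=
  f i (Str :|: Ss i) + \sum_(e <- enum O) gain (f i) (Str :|: Ss i) e
  + (k - l)%:R * gain (f i) (Str :|: Ss i) (ci h i Str (Ss i)).
Proof.
set A := Str :|: Ss i.
apply: bigmax_le => [|Si Si_small].
  by rewrite !addr_ge0 ?mulr_ge0 ?f_ge0 ?sumr_ge0 // => *; exact: gain_ge0.
apply: (@le_trans _ _ (f i (A :|: [set:: enum O ++ enum Si]))).
  apply: f_mono; apply/subsetP => x; rewrite !inE mem_cat !mem_enum.
  by case/orP=> ->; rewrite ?orbT.
apply: (le_trans (union_seq_le (f_mono i) (f_sub i) _ _)).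
rewrite big_cat /= addrA lerD2l.
apply: (@le_trans _ _ (\sum_(e <- enum Si) gain (f i) A (ci h i Str (Ss i)))).
  by apply: ler_sum => e _; exact: ci_greedy.
rewrite big_enum /= sumr_const -[_ *+ #|Si|]mulr_natl.
by rewrite ler_wpM2r ?ler_nat //; exact: gain_ge0.
Qed.

Lemma OPT_greedy_bound Str Ss h :
  OPT k l f <= value f (Str, Ss, h) + l%:R * tr_gain Str Ss h
               + (k - l)%:R * ind_gain Str Ss h.
Proof.
apply: bigmax_le => [|O O_small].
  by rewrite !addr_ge0 ?mulr_ge0 ?value_ge0 ?tr_gain_ge0 ?ind_gain_ge0.
apply: le_trans (ler_sum _ (fun i _ => completion_bound i O Str Ss h)) _.
rewrite !big_split /= -mulr_sumr lerD2r lerD2l exchange_big /=.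
apply: (@le_trans _ _ (\sum_(e <- enum O) tr_gain Str Ss h)).
  by apply: ler_sum => e _; exact: ctr_greedy.
by rewrite big_enum /= sumr_const -[_ *+ #|O|]mulr_natl ler_wpM2r ?tr_gain_ge0 // ler_nat.
Qed.

End GreedyBound.

Section RealInequalities.
Variable R : realType.

Lemma bernoulli_le (x : R) n : 0 <= x <= 1 -> 1 - n%:R * x <= (1 - x) ^+ n.
Proof.
case/andP=> x_ge0 x_le1; elim: n => [|n IH]; first by rewrite mul0r subr0 expr0.
have q_ge0 : 0 <= 1 - x by rewrite subr_ge0.
rewrite exprS; apply: le_trans (ler_wpM2l q_ge0 IH).
have : 0 <= n%:R * x * x by rewrite !mulr_ge0.
rewrite -natr1; lra.
Qed.

Lemma pow_one_sub_inv_le n : (0 < n)%N -> (1 - n%:R^-1) ^+ n <= expR (-1) :> R.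
Proof.
move=> n_gt0; have n_pos : 0 < n%:R :> R by rewrite ltr0n.
have -> : expR (-1) = expR (- n%:R^-1) ^+ n :> R.
  by rewrite -expRM_natl; congr expR; field; rewrite gt_eqF.
apply: (lerXn2r n); rewrite ?nnegrE ?expR_ge0 ?subr_ge0 ?invf_le1 ?ler1n //.
by have := expR_ge1Dx (- n%:R^-1 : R).
Qed.

Lemma expR_neg1_ge_third : 1 / 3 <= expR (-1) :> R.
Proof.
set y := expR (- (1 / 10)) : R.
have y_ge : 9 / 10 <= y by have := expR_ge1Dx (- (1 / 10) : R); rewrite -/y; lra.
have -> : expR (-1) = y ^+ 10 by rewrite -expRM_natl; congr expR; field.
have y2 : 81 / 100 <= y ^+ 2 by rewrite expr2; nra.
have y4 : 6561 / 10000 <= y ^+ 2 * y ^+ 2 by nra.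
have y8 : 43 / 100 <= (y ^+ 2 * y ^+ 2) * (y ^+ 2 * y ^+ 2) by nra.
have y10 : 1 / 3 <= (y ^+ 2 * y ^+ 2) * (y ^+ 2 * y ^+ 2) * y ^+ 2 by nra.
by rewrite -!exprD in y10.
Qed.

(* From [ln b <= b - 1]: [1 - sqrt b <= sqrt (ln (1/b))] on [0 < b <= 1]. *)
Lemma one_sub_sqrt_le (b : R) : 0 < b -> b <= 1 ->
  1 - Num.sqrt b <= Num.sqrt (ln b^-1).
Proof.
move=> b_gt0 b_le1; set s := Num.sqrt b.
have ln_ge : 1 - b <= ln b^-1.
  rewrite lnV ?posrE //.
  suff : ln b <= b - 1 by lra.
  by have := @le_ln1Dx R (b - 1); rewrite (_ : 1 + (b - 1) = b); [apply; lra | ring].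
have s_ge0 : 0 <= s by exact: sqrtr_ge0.
have s_sq : s ^+ 2 = b by rewrite sqr_sqrtr // ltW.
have s_le1 : s <= 1 by rewrite /s -sqrtr1; apply: ler_wsqrtr.
rewrite -(ger0_norm (_ : 0 <= 1 - s)) ?subr_ge0 // -sqrtr_sqr.
have : (1 - s) ^+ 2 <= 1 - b by rewrite -s_sq; nra.
by move=> sq_le; apply: ler_wsqrtr; lra.
Qed.

Lemma constant_comparison (b : R) : 0 < b -> b <= 1 ->
  1 - b - expR (-1 + 3 * Num.sqrt (b * ln b^-1)) <= 1 - expR (-1) - Num.sqrt b.
Proof.
move=> b_gt0 b_le1.
set s := Num.sqrt b; set t := Num.sqrt (ln b^-1).
have s_ge0 : 0 <= s by exact: sqrtr_ge0.
have t_ge0 : 0 <= t by exact: sqrtr_ge0.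
have s_sq : s ^+ 2 = b by rewrite sqr_sqrtr // ltW.
have st := one_sub_sqrt_le b_gt0 b_le1.
rewrite sqrtrM ?(ltW b_gt0) // -/s -/t.
have exp_ge : expR (-1) * (1 + 3 * (s * t)) <= expR (-1 + 3 * (s * t)).
  rewrite expRD; apply: ler_wpM2l; first exact: expR_ge0.
  by apply: expR_ge1Dx.
have third := expR_neg1_ge_third.
have : s * (1 - s) <= s * t by apply: ler_wpM2l.
have : 0 <= s * t by rewrite mulr_ge0.
rewrite -s_sq expr2; nra.
Qed.

(* At the end of the loop one side is full, so the number of wasted coins
   [K - (a + d)] is controlled by the drift [(1 - p) a - p d], [p = L / K]. *)
Lemma waste_drift_ineq (K L a d b : R) : 0 < L -> L < K ->
  1 <= b * L -> 1 <= b * (K - L) -> a = L \/ d = K - L ->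
  L / K * (1 - L / K) * (K - (a + d)) ^+ 2 <=
  K * b * ((1 - L / K) * a - L / K * d) ^+ 2.
Proof.
move=> L_gt0 L_lt_K bL bKL full.
have K_neq0 : K != 0 by rewrite gt_eqF // (lt_trans L_gt0).
have p_ge0 : 0 <= L / K by rewrite divr_ge0 // ltW // (lt_trans L_gt0).
have p_le1 : L / K <= 1 by rewrite ler_pdivrMr ?mul1r ?ltW // (lt_trans L_gt0).
case: full => [->|->]; set W := K - _.
- have -> : (1 - L / K) * L - L / K * d = L / K * W.
    by rewrite /W; field; exact: K_neq0.
  have -> : K * b * (L / K * W) ^+ 2 = (b * L) * (L / K * W ^+ 2).
    by field; exact: K_neq0.
  have : 0 <= L / K * W ^+ 2 by rewrite mulr_ge0 // sqr_ge0.
  nra.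
- have -> : (1 - L / K) * a - L / K * (K - L) = - ((1 - L / K) * W).
    by rewrite /W; field; exact: K_neq0.
  have -> : K * b * (- ((1 - L / K) * W)) ^+ 2 = (b * (K - L)) * ((1 - L / K) * W ^+ 2).
    by field; exact: K_neq0.
  have : 0 <= (1 - L / K) * W ^+ 2 by rewrite mulr_ge0 ?sqr_ge0 // subr_ge0.
  nra.
Qed.

End RealInequalities.

Lemma bconst_gt0 (R : realType) k l : (1 <= l)%N -> 0 < bconst R k l.
Proof.
move=> l_ge1; apply: (@lt_le_trans _ _ l%:R^-1); first by rewrite invr_gt0 ltr0n.
by rewrite /bconst le_max lexx orbT.
Qed.

Lemma bconst_le1 (R : realType) k l : (1 <= l)%N -> (l < k)%N -> bconst R k l <= 1.
Proof.
move=> l_ge1 l_lt_k.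
by rewrite /bconst ge_max !invf_le1 ?ltr0n ?ler1n ?subn_gt0 ?l_lt_k ?l_ge1.
Qed.

Section RandomizedLoop.
Variables (R : realType) (V : finType) (m k l : nat) (f : 'I_m -> {set V} -> R).
Variable ctr : seq bool -> {set V} -> {ffun 'I_m -> {set V}} -> V.
Variable ci : seq bool -> 'I_m -> {set V} -> {set V} -> V.
Hypotheses (l_ge1 : (1 <= l)%N) (l_lt_k : (l < k)%N).
Hypotheses (f_ge0 : forall i A, 0 <= f i A) (f_mono : forall i, monotone_set (f i))
  (f_sub : forall i, submodular_set (f i)).
Hypotheses (ctr_greedy : valid_tr_choice f ctr) (ci_greedy : valid_i_choice f ci).

Local Notation K := (k%:R : R).
Local Notation L := (l%:R : R).
Local Notation p := (L / K).
Local Notation r := (1 - K^-1).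
Local Notation b := (bconst R k l).
Local Notation opt := (OPT k l f).
Local Notation val := (value f).
Local Notation run := (loop k l ctr ci).
Local Notation init := (init_state V m).

Lemma K_gt0 : 0 < K.
Proof. by rewrite ltr0n; apply: leq_ltn_trans l_lt_k. Qed.

Lemma p_ge0 : 0 <= p.
Proof. by rewrite divr_ge0 // ltW // K_gt0. Qed.

Lemma p_le1 : p <= 1.
Proof. by rewrite ler_pdivrMr ?K_gt0 // mul1r ler_nat ltnW. Qed.

Lemma inv_K_ge0_le1 : 0 <= K^-1 <= 1.
Proof.
by rewrite invr_ge0 ltW ?K_gt0 //= invf_le1 ?K_gt0 // ler1n (leq_ltn_trans _ l_lt_k).
Qed.

Definition gap (st : state V m) : R := opt - val st.

(* One coin of the loop shrinks the expected gap by the factor [1 - 1/k]: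
   this is where the choice [p = l/k] balances the greedy bound. *)
Lemma step_gap_contraction st :
  p * gap (step_tr ctr st) + (1 - p) * gap (step_i ci st) <= r * gap st.
Proof.
case: st => [[Str Ss] h]; rewrite /gap value_step_tr value_step_i.
have := OPT_greedy_bound k l f_ge0 f_mono f_sub ctr_greedy ci_greedy Str Ss h.
rewrite natrB ?(ltnW l_lt_k) //.
set v := val _; set G := tr_gain _ _ _ _ _; set g := ind_gain _ _ _ _ _ => greedy.
have K_pos := K_gt0.
rewrite -subr_ge0.
have -> : r * (opt - v) - (p * (opt - (v + G)) + (1 - p) * (opt - (v + g))) =
          K^-1 * (L * G + (K - L) * g - (opt - v)).
  by field; rewrite gt_eqF.
by apply: mulr_ge0; [rewrite invr_ge0 ltW | lra].
Qed.

Definition running (st : state V m) := (ntr st < l)%N && (ni st < k - l)%N.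
Definition steps (st : state V m) := (ntr st + ni st)%N.

Lemma ntr_step_tr st : ntr (step_tr ctr st) = (ntr st).+1.
Proof. by case: st => [[Str Ss] h]; rewrite /ntr /= -cats1 count_cat /= addn0 addn1. Qed.

Lemma ni_step_tr st : ni (step_tr ctr st) = ni st.
Proof. by case: st => [[Str Ss] h]; rewrite /ni /= -cats1 count_cat /= !addn0. Qed.

Lemma ntr_step_i st : ntr (step_i ci st) = ntr st.
Proof. by case: st => [[Str Ss] h]; rewrite /ntr /= -cats1 count_cat /= !addn0. Qed.

Lemma ni_step_i st : ni (step_i ci st) = (ni st).+1.
Proof. by case: st => [[Str Ss] h]; rewrite /ni /= -cats1 count_cat /= addn0 addn1. Qed.

Lemma steps_step_tr st : steps (step_tr ctr st) = (steps st).+1.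
Proof. by rewrite /steps ntr_step_tr ni_step_tr addSn. Qed.

Lemma steps_step_i st : steps (step_i ci st) = (steps st).+1.
Proof. by rewrite /steps ntr_step_i ni_step_i addnS. Qed.

Lemma loop_stop s st : ~~ running st -> run s st = st.
Proof. by rewrite /running => /negbTE stop; case: s => [|c s] //=; rewrite stop. Qed.

Lemma loop_cons c s st : running st ->
  run (c :: s) st = run s (if c then step_tr ctr st else step_i ci st).
Proof. by rewrite /running /= => ->. Qed.

Lemma coinE_run_cons n (F : state V m -> R) c st : running st ->
  coinE p n (fun s => F (run (c :: s) st)) =
  coinE p n (fun s => F (run s (if c then step_tr ctr st else step_i ci st))).
Proof. by move=> going; apply: coinE_ext => s; rewrite loop_cons. Qed.

(* Coins tossed after the loop has stopped are wasted. *)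
Definition wasted s st : R := (size s)%:R + (steps st)%:R - (steps (run s st))%:R.

(* Without any step the gap still meets the contraction bound up to [OPT/k]
   per coin, because [1 - n/k <= (1 - 1/k)^n] (Bernoulli). *)
Lemma gap_idle n st : gap st <= r ^+ n * gap st + opt / K * n%:R.
Proof.
have rn_ge : 1 - n%:R * K^-1 <= r ^+ n := bernoulli_le n inv_K_ge0_le1.
have /andP[Kinv_ge0 Kinv_le1] := inv_K_ge0_le1.
have rn_le1 : r ^+ n <= 1 by apply: exprn_ile1; lra.
have := value_ge0 f_ge0 st; have := OPT_ge0 k l f.
rewrite /gap mulrAC -mulrA; nra.
Qed.

Lemma gap_after_loop n st :
  coinE p n (fun s => gap (run s st)) <=
  r ^+ n * gap st + opt / K * coinE p n (fun s => wasted s st).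
Proof.
elim: n st => [|n IH] st.
  by rewrite /= /wasted /= expr0 mul1r add0r subrr mulr0 addr0.
have [going|stopped] := boolP (running st); last first.
  have idle_gap : coinE p n.+1 (fun s => gap (run s st)) = gap st.
    by rewrite -(coinE_cst p n.+1 (gap st)); apply: coinE_ext => s; rewrite loop_stop.
  have idle_wasted : coinE p n.+1 (fun s => wasted s st) = n.+1%:R.
    rewrite -(addr0 n.+1%:R) -(coinE_size p n.+1 0); apply: coinE_ext => s.
    by rewrite /wasted loop_stop // addrK addr0.
  by rewrite idle_gap idle_wasted; exact: gap_idle.
have shift_wasted c : coinE p n (fun s => wasted (c :: s) st) =
    coinE p n (fun s => wasted s (if c then step_tr ctr st else step_i ci st)).
  apply: coinE_ext => s; rewrite /wasted loop_cons //.
  by case: c; rewrite ?steps_step_tr ?steps_step_i /= -!natr1; ring.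
rewrite !coinES !coinE_run_cons // !shift_wasted /=.
have q_ge0 : 0 <= 1 - p by rewrite subr_ge0 p_le1.
apply: le_trans (lerD (ler_wpM2l p_ge0 (IH _)) (ler_wpM2l q_ge0 (IH _))) _.
have rn_ge0 : 0 <= r ^+ n by rewrite exprn_ge0 // subr_ge0; case/andP: inv_K_ge0_le1.
set A1 := coinE p n (fun s => wasted s (step_tr ctr st)).
set A2 := coinE p n (fun s => wasted s (step_i ci st)).
rewrite exprSr [X in X <= _](_ : _ = r ^+ n * (p * gap (step_tr ctr st)
    + (1 - p) * gap (step_i ci st)) + opt / K * (p * A1 + (1 - p) * A2)); last by ring.
rewrite lerD2r -[_ * r * _]mulrA.
by apply: ler_wpM2l => //; exact: step_gap_contraction.
Qed.

Definition drift (st : state V m) : R := (1 - p) * (ntr st)%:R - p * (ni st)%:R.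
Definition drift_energy (st : state V m) : R :=
  drift st ^+ 2 - p * (1 - p) * (steps st)%:R.

Lemma drift_energy_martingale n st :
  coinE p n (fun s => drift_energy (run s st)) = drift_energy st.
Proof.
elim: n st => [|n IH] st //.
have [going|stopped] := boolP (running st); last first.
  rewrite -(coinE_cst p n.+1 (drift_energy st)).
  by apply: coinE_ext => s; rewrite loop_stop.
rewrite coinES !coinE_run_cons // !IH /drift_energy /drift.
rewrite ntr_step_tr ni_step_tr ntr_step_i ni_step_i steps_step_tr steps_step_i.
by rewrite -!natr1; ring.
Qed.

Lemma loop_bounds s st : (ntr st <= l)%N -> (ni st <= k - l)%N ->
  [&& (ntr (run s st) <= l)%N, (ni (run s st) <= k - l)%N &
      ~~ running (run s st) || (steps (run s st) == steps st + size s)%N].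
Proof.
elim: s st => [|c s IH] st tr_le i_le; first by rewrite /= tr_le i_le addn0 eqxx orbT.
have [going|stopped] := boolP (running st); last by rewrite loop_stop // tr_le i_le stopped.
rewrite loop_cons //; case/andP: going => tr_lt i_lt; case: c.
  have := IH (step_tr ctr st); rewrite ntr_step_tr ni_step_tr steps_step_tr.
  by move=> /(_ tr_lt i_le); rewrite addSnnS.
have := IH (step_i ci st); rewrite ntr_step_i ni_step_i steps_step_i.
by move=> /(_ tr_le i_lt); rewrite addSnnS.
Qed.

Lemma loop_final s : size s = k ->
  [/\ (ntr (run s init) <= l)%N, (ni (run s init) <= k - l)%N &
      ntr (run s init) = l \/ ni (run s init) = (k - l)%N].
Proof.
move=> size_s.
have /and3P[tr_le i_le stop] := @loop_bounds s init (leq0n l) (leq0n (k - l)).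
split => //; have : ~~ running (run s init).
  move: stop; rewrite size_s => /orP[] // /eqP steps_eq.
  apply/negP; rewrite /running => /andP[tr_lt i_lt].
  by move: steps_eq; rewrite /steps /= add0n; lia.
by rewrite /running negb_and -!leqNgt => /orP[] ?; [left|right]; lia.
Qed.

Lemma inv_l_le_b : 1 <= b * L.
Proof.
have L_gt0 : 0 < L by rewrite ltr0n.
rewrite -[X in X <= _](mulVf (lt0r_neq0 L_gt0)) ler_pM2r //.
by rewrite /bconst le_max lexx orbT.
Qed.

Lemma inv_kl_le_b : 1 <= b * (K - L).
Proof.
have KL_gt0 : 0 < (k - l)%:R :> R by rewrite ltr0n subn_gt0.
rewrite -natrB ?(ltnW l_lt_k) // -[X in X <= _](mulVf (lt0r_neq0 KL_gt0)) ler_pM2r //.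
by rewrite /bconst le_max lexx.
Qed.

Lemma wasted_vs_drift s : size s = k ->
  p * (1 - p) * wasted s init ^+ 2 <= K * b * drift (run s init) ^+ 2.
Proof.
move=> size_s; have [_ _ full] := loop_final size_s.
have steps_init : steps init = 0%N by [].
rewrite /wasted /drift size_s steps_init addr0 /steps natrD.
apply: waste_drift_ineq; rewrite ?ltr0n ?ltr_nat ?inv_l_le_b ?inv_kl_le_b //.
by case: full => ->; [left | right; rewrite natrB // ltnW].
Qed.

(* Hence [E W^2 <= b k^2], and so [E W <= k sqrt b]. *)
Lemma expected_wasted_le : coinE p k (fun s => wasted s init) <= K * Num.sqrt b.
Proof.
have b_gt0 := bconst_gt0 R k l_ge1.
have pq_gt0 : 0 < p * (1 - p).
  apply: mulr_gt0; first by rewrite divr_gt0 ?K_gt0 ?ltr0n.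
  by rewrite subr_gt0 ltr_pdivrMr ?K_gt0 // mul1r ltr_nat.
have drift2_E : coinE p k (fun s => drift (run s init) ^+ 2) =
    p * (1 - p) * coinE p k (fun s => (steps (run s init))%:R).
  have := drift_energy_martingale k init.
  rewrite /drift_energy coinEB coinEZ /drift /steps /= !mulr0 subrr expr0n /=.
  by move/eqP; rewrite subr0 subr_eq0 => /eqP.
have steps_E : coinE p k (fun s => (steps (run s init))%:R) <= K.
  rewrite -[X in _ <= X](coinE_cst p k K); apply: (coinE_le p_ge0 p_le1) => s size_s.
  have [tr_le i_le _] := loop_final size_s.
  by rewrite ler_nat (leq_trans (leq_add tr_le i_le)) // subnKC // ltnW.
apply: (coinE_le_of_sq p_ge0 p_le1); first by rewrite mulr_gt0 ?K_gt0 ?sqrtr_gt0.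
have sqrt_b_sq : Num.sqrt b ^+ 2 = b by rewrite sqr_sqrtr // ltW.
rewrite exprMn sqrt_b_sq -(ler_pM2l pq_gt0) -coinEZ.
apply: (@le_trans _ _ (coinE p k (fun s => K * b * drift (run s init) ^+ 2))).
  by apply: (coinE_le p_ge0 p_le1) => s size_s; exact: wasted_vs_drift.
rewrite coinEZ drift2_E.
set q := p * (1 - p) in pq_gt0 *; set E := coinE p k _ in steps_E *.
rewrite mulrA [X in _ <= X](_ : _ = K * b * q * K); last by ring.
by apply: ler_wpM2l => //; exact/ltW/mulr_gt0/pq_gt0/mulr_gt0/b_gt0/K_gt0.
Qed.

(* The greedy steps never decrease the objective, so neither does the fill-up. *)
Lemma value_iter_ge (step : state V m -> state V m) :
  (forall st, val st <= val (step st)) -> forall n st, val st <= val (iter n step st).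
Proof. by move=> step_ge n st; elim: n => [|n IH] //=; exact: le_trans IH (step_ge _). Qed.

Lemma value_fill_ge st : val st <= val (fill k l ctr ci st).
Proof.
apply: le_trans (value_iter_ge _ _ _) (value_iter_ge _ _ _) => [[[Str Ss] h]|[[Str Ss] h]].
  by rewrite value_step_tr lerDl tr_gain_ge0.
by rewrite value_step_i lerDl ind_gain_ge0.
Qed.

Lemma greedy_expectation_bound :
  (1 - expR (-1) - Num.sqrt b) * opt <=
  coinE p k (fun s => val (fill k l ctr ci (run s init))).
Proof.
apply: le_trans (coinE_le p_ge0 p_le1 (fun s _ => value_fill_ge (run s init))).
have := gap_after_loop k init.
rewrite /gap coinEB coinE_cst.
have decay : r ^+ k * (opt - val init) <= expR (-1) * opt.
  have := value_ge0 f_ge0 init; have := OPT_ge0 k l f.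
  have := pow_one_sub_inv_le R (leq_ltn_trans (leq0n l) l_lt_k).
  have : 0 <= r ^+ k by rewrite exprn_ge0 // subr_ge0; case/andP: inv_K_ge0_le1.
  nra.
have waste : opt / K * coinE p k (fun s => wasted s init) <= Num.sqrt b * opt.
  have K_pos := K_gt0.
  have -> : Num.sqrt b * opt = opt / K * (K * Num.sqrt b) by field; rewrite gt_eqF.
  by apply: ler_wpM2l expected_wasted_le; rewrite divr_ge0 ?OPT_ge0 // ltW.
lra.
Qed.

End RandomizedLoop.

Unset Implicit Arguments.

Theorem theorem2 (R : realType) (V : finType) (m k l : nat)
  (f : 'I_m -> {set V} -> R)
  (ctr : seq bool -> {set V} -> {ffun 'I_m -> {set V}} -> V)
  (ci : seq bool -> 'I_m -> {set V} -> {set V} -> V) :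
  (1 <= l)%N -> (l < k)%N -> (k <= #|V|)%N ->
  (forall i A, 0 <= f i A) ->
  (forall i, monotone_set (f i)) ->
  (forall i, submodular_set (f i)) ->
  valid_tr_choice f ctr ->
  valid_i_choice f ci ->
  (1 - bconst R k l - expR (-1 + cconst R k l)) * OPT k l f
    <= expected_value k l f ctr ci.
Proof.
move=> l_ge1 l_lt_k _ f_ge0 f_mono f_sub ctr_greedy ci_greedy.
have -> : expected_value k l f ctr ci = coinE (l%:R / k%:R) k
    (fun s => value f (fill k l ctr ci (loop k l ctr ci s (init_state V m)))).
  by rewrite -coin_sum.
apply: le_trans (greedy_expectation_bound l_ge1 l_lt_k f_ge0 f_mono f_sub
                   ctr_greedy ci_greedy).
apply: ler_wpM2r; first exact: OPT_ge0.
exact: constant_comparison (bconst_gt0 R k l_ge1) (bconst_le1 R l_ge1 l_lt_k).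
Qed.
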